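(* Assume (H1) and (H3). For any compact set $K\subset\mathbb R\setminus\{0\}$ there exist constants $c_K>0$ and $c_K'>0$ such that for every $n\geqslant1$, \[ \sup_{t\in K}\|\mathbf P_t^n\|_{\mathscr C\to\mathscr C}\leqslant c_Ke^{-c_K'n}. \]
   Context: $\mathbb X$ is a finite set, $\mathbf P$ a Markov transition matrix on $\mathbb X$, $f:\mathbb X\to\mathbb R$. $\mathscr C$ is the space of complex functions on $\mathbb X$ with $\|g\|_\infty=\max_x|g(x)|$, and for an operator $R$ on $\mathscr C$, $\|R\|_{\mathscr C\to\mathscr C}=\sup_{g\neq0}\|Rg\|_\infty/\|g\|_\infty$. (H1): there exists $k_0\geqslant1$ such that $\mathbf P^{k_0}g(x)>0$ for all $x$ and every non-negative, not identically zero $g$. (H3): for every $(\theta,a)\in\mathbb R^2$ there exist $n\geqslant0$ and $x_0,\dots,x_n$ with $\mathbf P(x_0,x_1)\cdots\mathbf P(x_{n-1},x_n)\mathbf P(x_n,x_0)>0$ and $f(x_0)+\dots+f(x_n)-(n+1)\theta\notin a\mathbb Z$. For $t\in\mathbb R$, $\mathbf P_tg(x)=\sum_{x'}e^{itf(x')}g(x')\mathbf P(x,x')$. *)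

From HB Require Import structures.
From mathcomp Require Import all_boot all_order all_algebra.
From mathcomp Require Import all_classical all_reals all_analysis.
From mathcomp Require Import complex.
Set Implicit Arguments. Unset Strict Implicit. Unset Printing Implicit Defensive.
Import Order.TTheory GRing.Theory Num.Theory numFieldNormedType.Exports.
Local Open Scope ring_scope.
Local Open Scope classical_set_scope.

Section Defs.
Variable R : realType.
Variable X : finType.

Definition cmod (z : R[i]) : R := ComplexField.Normc.normc z.

Definition expi (theta : R) : R[i] := Complex (cos theta) (sin theta).

Definition markov_matrix (P : X -> X -> R) : Prop :=
  (forall x y, 0 <= P x y) /\ (forall x, \sum_(y : X) P x y = 1).

Definition Pop (P : X -> X -> R) (g : X -> R) : X -> R :=
  fun x => \sum_(x' : X) P x x' * g x'.

Definition H1 (P : X -> X -> R) : Prop :=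
  exists k0 : nat, (1 <= k0)%N /\
    forall g : X -> R, (forall x, 0 <= g x) -> (exists x, g x != 0) ->
      forall x, 0 < iter k0 (Pop P) g x.

Definition H3 (P : X -> X -> R) (f : X -> R) : Prop :=
  forall theta a : R, exists (n : nat) (xs : nat -> X),
    0 < (\prod_(i < n) P (xs i) (xs i.+1)) * P (xs n) (xs 0%N) /\
    ~ (exists k : int, \sum_(i < n.+1) f (xs i) - n.+1%:R * theta = a * k%:~R).

Definition Pt (P : X -> X -> R) (f : X -> R) (t : R) (g : X -> R[i]) : X -> R[i] :=
  fun x => \sum_(x' : X) expi (t * f x') * g x' * ((P x x')%:C)%C.

Definition supnorm (g : X -> R[i]) : R := \big[Order.max/0]_(x : X) cmod (g x).

Definition opnorm (Op : (X -> R[i]) -> (X -> R[i])) : R :=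
  sup [set r | exists g : X -> R[i], (exists x, g x != 0) /\
                 r = supnorm (Op g) / supnorm g].

End Defs.

(* Write P_t^m g(x) = sum_y Q_t^m(x,y) g(y), with Q_t^m = [Ptpow t m].  Then
   |Q_t^m(x,y)| <= P^m(x,y), so ||P_t^m|| is bounded by the largest row mass
   [mass t m x] = sum_y |Q_t^m(x,y)|, which is at most 1 and nonincreasing in m.
   If for some x and t <> 0 all the inequalities |Q_t^m(x,y)| <= P^m(x,y) were
   equalities, the equality case of the triangle inequality would make the
   phases Q_t^m(x,y) / P^m(x,y) advance by e^{itf(z)} along every edge y -> z
   and, thanks to (H1), by a common unit factor e^{i alpha} at each step; going
   around a cycle x_0 -> ... -> x_n -> x_0 gives
   t (f(x_0) + ... + f(x_n)) - (n+1) alpha in 2 pi Z, contradicting (H3).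
   Hence some power P_t^M has all its row masses below 1.  Row masses are
   Lipschitz in t, so compactness of K yields one M and one q < 1 valid for all
   t in K, and ||P_t^n|| <= q^(n / M) decays exponentially. *)

From HB Require Import structures.
From mathcomp Require Import all_boot all_order all_algebra.
From mathcomp Require Import all_classical all_reals all_analysis.
From mathcomp Require Import complex.
From mathcomp Require Import ring lra.
Set Implicit Arguments. Unset Strict Implicit. Unset Printing Implicit Defensive.
Import Order.TTheory GRing.Theory Num.Theory numFieldNormedType.Exports.
Local Open Scope ring_scope.
Local Open Scope classical_set_scope.

Section KernelPowers.
Variables (X : finType) (V : pzSemiRingType).
Implicit Types (k : X -> X -> V) (g : X -> V).

Definition kernel_op k g : X -> V := fun x => \sum_x' k x x' * g x'.

Definition kernel_pow k m x y : V :=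
  iter m (kernel_op k) (fun x' => (x' == y)%:R) x.

Lemma sum_delta_mul g x : \sum_y (x == y)%:R * g y = g x.
Proof.
under eq_bigr do rewrite mulr_natl mulrb.
by rewrite -big_mkcond (big_pred1 x) // => y; rewrite /= eq_sym.
Qed.

Lemma kernel_pow0 k x y : kernel_pow k 0 x y = (x == y)%:R.
Proof. by []. Qed.

Lemma kernel_powS k m x y :
  kernel_pow k m.+1 x y = \sum_w k x w * kernel_pow k m w y.
Proof. by []. Qed.

Lemma iter_kernel_op k m g x :
  iter m (kernel_op k) g x = \sum_y kernel_pow k m x y * g y.
Proof.
elim: m x => [|m IHm] x; first by rewrite sum_delta_mul.
transitivity (\sum_x' k x x' * iter m (kernel_op k) g x'); first by [].
under eq_bigr => x' _ do rewrite IHm big_distrr.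
rewrite exchange_big; apply: eq_bigr => y _.
by rewrite kernel_powS big_distrl /=; apply: eq_bigr => w _; rewrite mulrA.
Qed.

Lemma kernel_powD k a b x y :
  kernel_pow k (a + b) x y = \sum_w kernel_pow k a x w * kernel_pow k b w y.
Proof. by rewrite /kernel_pow iterD iter_kernel_op. Qed.

Lemma kernel_pow1 k x y : kernel_pow k 1 x y = k x y.
Proof.
rewrite kernel_powS.
under eq_bigr do rewrite kernel_pow0 mulr_natr mulrb.
by rewrite -big_mkcond big_pred1_eq.
Qed.

Lemma kernel_powSr k m x y :
  kernel_pow k m.+1 x y = \sum_w kernel_pow k m x w * k w y.
Proof.
by rewrite -addn1 kernel_powD; under eq_bigr do rewrite kernel_pow1.
Qed.

End KernelPowers.

Section ComplexModulus.
Variable R : realType.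
Local Open Scope complex_scope.
Implicit Types z w : R[i].

Lemma cmodE z : (cmod z)%:C = `|z|. Proof. by []. Qed.

Lemma cmod_ge0 z : 0 <= cmod z.
Proof. by rewrite -lecR cmodE normr_ge0. Qed.

Lemma cmodM z w : cmod (z * w) = cmod z * cmod w.
Proof. exact: ComplexField.Normc.normcM. Qed.

Lemma cmodV z : cmod z^-1 = (cmod z)^-1.
Proof. exact: ComplexField.Normc.normcV. Qed.

Lemma cmodR (r : R) : cmod r%:C = `|r|.
Proof. by apply: complexI; rewrite cmodE normc_def /= expr0n /= addr0 sqrtr_sqr. Qed.

Lemma cmod0 : cmod 0 = 0 :> R.
Proof. by rewrite -(normr0 R); exact: cmodR. Qed.

Lemma cmod1 : cmod 1 = 1 :> R.
Proof. by rewrite -(normr1 R); exact: cmodR. Qed.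

Lemma cmod_gt0 z : (0 < cmod z) = (z != 0).
Proof. by rewrite -ltcR cmodE normr_gt0. Qed.

Lemma realC_neq0 (r : R) : (r%:C != 0) = (r != 0).
Proof. by rewrite -cmod_gt0 cmodR normr_gt0. Qed.

Lemma cmodD z w : cmod (z + w) <= cmod z + cmod w.
Proof. by rewrite -lecR rmorphD /= !cmodE ler_normD. Qed.

Lemma cmod_sum (I : finType) (F : I -> R[i]) :
  cmod (\sum_i F i) <= \sum_i cmod (F i).
Proof.
rewrite -lecR cmodE rmorph_sum /=.
under [X in _ <= X]eq_bigr do rewrite cmodE.
exact: ler_norm_sum.
Qed.

Lemma cmod_Complex_le (a b : R) : cmod (Complex a b) <= `|a| + `|b|.
Proof.
have -> : Complex a b = a%:C + b%:C * 'i.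
  by apply/eqP; rewrite eq_complex /= !(mulr0, mul0r, mulr1, subr0, addr0, add0r) !eqxx.
have cmodi : cmod ('i : R[i]) = 1 by apply: (@complexI R); rewrite cmodE normCi.
by apply: le_trans (cmodD _ _) _; rewrite cmodM !cmodR cmodi mulr1.
Qed.

End ComplexModulus.

Section ComplexExponential.
Variable R : realType.
Local Open Scope complex_scope.
Implicit Types a b : R.

Lemma cmod_expi a : cmod (expi a) = 1.
Proof. by rewrite /cmod /expi /ComplexField.Normc.normc cos2Dsin2 sqrtr1. Qed.

Lemma expi_neq0 a : expi a != 0.
Proof. by rewrite -cmod_gt0 cmod_expi. Qed.

Lemma expiD a b : expi a * expi b = expi (a + b).
Proof.
rewrite /expi cosD sinD; apply/eqP; rewrite eq_complex /=.
by apply/andP; split; apply/eqP; ring.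
Qed.

Lemma expi0 : expi 0 = 1 :> R[i].
Proof. by rewrite /expi cos0 sin0. Qed.

Lemma expiMn a k : expi a ^+ k = expi (a *+ k).
Proof.
elim: k => [|k IHk]; first by rewrite expr0 mulr0n expi0.
by rewrite exprS IHk expiD mulrS.
Qed.

Lemma cosD2pi_int a (k : int) : cos (a + pi *+ 2 * k%:~R) = cos a.
Proof.
have cosDn (n : nat) b : cos (b + pi *+ 2 *+ n) = cos b.
  exact: (periodicn (@cosD2pi R)).
case: k => n; first by rewrite -pmulrn mulr_natr cosDn.
by rewrite NegzE intrN mulrN -pmulrn -(cosDn n.+1) mulr_natr subrK.
Qed.

Lemma cos_eq1 a : cos a = 1 -> exists k : int, a = pi *+ 2 * k%:~R.
Proof.
move=> cosa1; have pi2_gt0 : 0 < pi *+ 2 :> R by rewrite pmulrn_rgt0 // pi_gt0.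
set k := Num.floor (a / (pi *+ 2)).
have /andP[k_le k_gt] := floor_itv (a / (pi *+ 2)).
set b := a - pi *+ 2 * k%:~R.
have b_ge0 : 0 <= b by rewrite subr_ge0 mulrC -ler_pdivlMr.
have b_lt : b < pi *+ 2.
  by move: k_gt; rewrite ltr_pdivrMr // intrD mulrDl mul1r /b (mulrC k%:~R); lra.
have cosb1 : cos b = 1 by rewrite -cosa1 /b -mulrN -intrN cosD2pi_int.
exists k; apply/eqP; rewrite -subr_eq0 -/b.
have [b_le_pi|pi_lt_b] := leP b pi.
  by rewrite -[b]cosK ?in_itv /= ?b_ge0 // cosb1 acos1.
have : 0 <= pi *+ 2 - b <= pi by apply/andP; split; lra.
move=> /cosK; rewrite addrC cosD2pi cosN cosb1 acos1; lra.
Qed.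

Lemma expi_eq1 a : expi a = 1 -> exists k : int, a = pi *+ 2 * k%:~R.
Proof. by move=> /eqP; rewrite eq_complex /= => /andP[/eqP/cos_eq1]. Qed.

Lemma cmod_eq1_expi (c : R[i]) : cmod c = 1 -> exists a, c = expi a.
Proof.
case: c => a b; rewrite /cmod /ComplexField.Normc.normc /= => ab1.
have a2b2 : a ^+ 2 + b ^+ 2 = 1.
  by rewrite -[LHS]sqr_sqrtr ?addr_ge0 ?sqr_ge0 // ab1 expr1n.
have a_itv : -1 <= a <= 1.
  rewrite -ler_norml -(ler_pXn2r (n:=2)) ?nnegrE // real_normK ?num_real //.
  by rewrite expr1n -a2b2 lerDl sqr_ge0.
have sin_acos_a : sin (acos a) = `|b| by rewrite sin_acos // -a2b2 addrC addKr sqrtr_sqr.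
have [b_ge0|b_lt0] := leP 0 b.
  by exists (acos a); rewrite /expi acosK ?in_itv // sin_acos_a ger0_norm.
exists (- acos a).
by rewrite /expi cosN sinN acosK ?in_itv // sin_acos_a ltr0_norm ?opprK.
Qed.

Lemma dist_le_of_derive (g dg : R -> R) :
  (forall a, is_derive a 1 g (dg a)) -> (forall a, `|dg a| <= 1) ->
  forall a b, `|g a - g b| <= `|a - b|.
Proof.
move=> g_dg dg_le1.
suff lt_case a b : a < b -> `|g a - g b| <= `|a - b|.
  move=> a b; have [ab|ba|->] := ltgtP a b; first exact: lt_case.
    by rewrite distrC [leRHS]distrC lt_case.
  by rewrite !subrr normr0.
move=> ab; have g_cont :=
  derivable_within_continuous (fun a _ => @ex_derive _ _ _ a 1 g (dg a) (g_dg a)).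
have [c _ gba] := MVT ab (fun a _ => g_dg a) (g_cont `[a, b]%O).
by rewrite distrC gba [leRHS]distrC normrM -[leRHS]mul1r ler_wpM2r.
Qed.

Lemma cmod_expiB a b : cmod (expi a - expi b) <= 2 * `|a - b|.
Proof.
have -> : expi a - expi b = Complex (cos a - cos b) (sin a - sin b) by [].
apply: le_trans (cmod_Complex_le _ _) _; rewrite mulr2n mulrDl mul1r; apply: lerD.
  by apply: (@dist_le_of_derive cos (fun x => - sin x)) => x; rewrite normrN sin_max.
by apply: (@dist_le_of_derive sin cos) => x; rewrite cos_max.
Qed.

End ComplexExponential.

Lemma sup_le_ge0 (R : realType) (A : set R) (B : R) :
  0 <= B -> ubound A B -> sup A <= B.
Proof.
move=> B_ge0 AB; have [->|/set0P A_neq0] := eqVneq A set0; first by rewrite sup0.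
exact: ge_sup.
Qed.

Lemma psumr_gt0_exists (R : numDomainType) (I : finType) (F : I -> R) :
  (forall i, 0 <= F i) -> 0 < \sum_i F i -> exists i, 0 < F i.
Proof.
move=> F_ge0 /gt_eqF/negbT; rewrite psumr_neq0 // => /hasP[i _ /andP[_ Fi_gt0]].
by exists i.
Qed.

Lemma near_infty_le_natSinv (R : realType) (q : R) :
  q < 1 -> \forall M \near \oo, q <= 1 - M.+1%:R^-1.
Proof.
move=> q_lt1; have e_gt0 : 0 < 1 - q by rewrite subr_gt0.
apply: filterS (near_infty_natSinv_lt (PosNum e_gt0)) => M /= /ltW.
by set x := M.+1%:R^-1; lra.
Qed.

Lemma exprn_divn_le_expR (R : realType) (a : R) (M n : nat) : (0 < M)%N ->
  0 <= a <= 1 -> (1 - a) ^+ (n %/ M) <= expR a * expR (- (a / M%:R * n%:R)).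
Proof.
move=> M_gt0 /andP[a_ge0 a_le1].
have le_expR : 1 - a <= expR (- a) := expR_ge1Dx (- a).
apply: le_trans (lerXn2r _ _ _ le_expR) _; rewrite ?nnegrE ?subr_ge0 ?expR_ge0 //.
rewrite -expRM_natl -expRD ler_expR.
have nM_le : n%:R / M%:R <= (n %/ M)%:R + 1 :> R.
  by rewrite ler_pdivrMr ?ltr0n // natr1 -natrM ler_nat ltnW // ltn_ceil.
have := ler_wpM2l a_ge0 nM_le; rewrite mulrAC -mulrA.
by set y := n%:R / M%:R; set k := (n %/ M)%:R; nra.
Qed.

Section SupNorm.
Variables (R : realType) (X : finType).
Implicit Types (g : X -> R[i]) (B : R).

Lemma supnorm_ge0 g : 0 <= supnorm g.
Proof.
apply: (big_ind (fun v => 0 <= v)) => // [a b a_ge0 _|x _]; last exact: cmod_ge0.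
by rewrite le_max a_ge0.
Qed.

Lemma cmod_le_supnorm g x : cmod (g x) <= supnorm g.
Proof. by rewrite /supnorm (bigD1 x) //= le_max lexx. Qed.

Lemma supnorm_le g B : 0 <= B -> (forall x, cmod (g x) <= B) -> supnorm g <= B.
Proof.
move=> B_ge0 gB; apply: (big_ind (fun v => v <= B)) => // a b aB bB.
by rewrite ge_max aB.
Qed.

Lemma opnorm_le (Op : (X -> R[i]) -> X -> R[i]) B : 0 <= B ->
  (forall g, supnorm (Op g) <= B * supnorm g) -> opnorm Op <= B.
Proof.
move=> B_ge0 OpB; apply: sup_le_ge0 => // _ [g [[x gx_neq0] ->]].
have g_gt0 : 0 < supnorm g.
  by apply: lt_le_trans (cmod_le_supnorm g x); rewrite cmod_gt0.
by rewrite ler_pdivrMr.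
Qed.

End SupNorm.

(** * The twisted kernel *)

Section TwistedKernel.
Variables (R : realType) (X : finType) (P : X -> X -> R) (f : X -> R).
Hypothesis P_markov : markov_matrix P.
Local Open Scope complex_scope.

Let P_ge0 x y : 0 <= P x y. Proof. by case: P_markov. Qed.
Let P_sum1 x : \sum_y P x y = 1. Proof. by case: P_markov. Qed.

Definition Ppow := kernel_pow P.

Lemma Ppow_ge0 m x y : 0 <= Ppow m x y.
Proof.
elim: m x => [|m IHm] x; first by rewrite /Ppow kernel_pow0 ler0n.
by rewrite /Ppow kernel_powS; apply: sumr_ge0 => w _; rewrite mulr_ge0.
Qed.

Lemma Ppow_sum1 m x : \sum_y Ppow m x y = 1.
Proof.
have iter_one : iter m (kernel_op P) (fun _ => 1) = (fun _ => 1).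
  elim: m => [|m IHm] //=; rewrite IHm; apply: funext => x'.
  by rewrite /kernel_op -[RHS](P_sum1 x'); apply: eq_bigr => y _; rewrite mulr1.
have := iter_kernel_op P m (fun _ => 1) x; rewrite iter_one => /= one_eq.
by rewrite [RHS]one_eq; apply: eq_bigr => y _; rewrite mulr1.
Qed.

Lemma Ppow_le1 m x y : Ppow m x y <= 1.
Proof.
rewrite -(Ppow_sum1 m x) (bigD1 y) //= lerDl.
by apply: sumr_ge0 => *; exact: Ppow_ge0.
Qed.

Definition twisted_kernel t x x' : R[i] := expi (t * f x') * (P x x')%:C.

Lemma Pt_kernel_opE t : Pt P f t = kernel_op (twisted_kernel t).
Proof.
apply: funext => g; apply: funext => x.
by apply: eq_bigr => x' _; rewrite mulrAC.
Qed.

Definition Ptpow t := kernel_pow (twisted_kernel t).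

Lemma cmod_twisted_kernel t x x' : cmod (twisted_kernel t x x') = P x x'.
Proof. by rewrite cmodM cmod_expi mul1r cmodR ger0_norm. Qed.

Lemma cmod_Ptpow_le t m x y : cmod (Ptpow t m x y) <= Ppow m x y.
Proof.
elim: m x => [|m IHm] x.
  rewrite /Ptpow /Ppow !kernel_pow0.
  by case: (x == y); rewrite ?mulr1n ?mulr0n ?cmod0 ?cmod1 lexx.
rewrite /Ptpow /Ppow !kernel_powS; apply: le_trans (cmod_sum _) _.
by apply: ler_sum => w _; rewrite cmodM cmod_twisted_kernel ler_wpM2l //; exact: IHm.
Qed.

Definition mass t m x := \sum_y cmod (Ptpow t m x y).

Lemma mass_le1 t m x : mass t m x <= 1.
Proof. by rewrite -(Ppow_sum1 m x); apply: ler_sum => y _; exact: cmod_Ptpow_le. Qed.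

Lemma mass_lt1 t m x y : cmod (Ptpow t m x y) < Ppow m x y -> mass t m x < 1.
Proof.
move=> lt_y; rewrite -(Ppow_sum1 m x) /mass (bigD1 y) //= [ltRHS](bigD1 y) //=.
by rewrite ltr_leD //; apply: ler_sum => z _; exact: cmod_Ptpow_le.
Qed.

Lemma mass_nonincreasing t x : {homo mass t ^~ x : a b / (a <= b)%N >-> b <= a}.
Proof.
move=> a b /subnKC <-; rewrite /mass /Ptpow.
under eq_bigr do rewrite kernel_powD.
apply: le_trans (_ : \sum_y \sum_w cmod (Ptpow t a x w) * cmod (Ptpow t (b - a) w y) <= _).
  apply: ler_sum => y _; apply: le_trans (cmod_sum _) _.
  by apply: ler_sum => w _; rewrite cmodM.
rewrite exchange_big /=; apply: ler_sum => w _.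
by rewrite -mulr_sumr ler_piMr ?cmod_ge0 ?mass_le1.
Qed.

Lemma supnorm_iter_Pt_le t m B g : 0 <= B -> (forall x, mass t m x <= B) ->
  supnorm (iter m (Pt P f t) g) <= B * supnorm g.
Proof.
move=> B_ge0 massB; apply: supnorm_le => [|x]; first by rewrite mulr_ge0 ?supnorm_ge0.
rewrite Pt_kernel_opE iter_kernel_op; apply: le_trans (cmod_sum _) _.
apply: le_trans (_ : \sum_y cmod (Ptpow t m x y) * supnorm g <= _).
  by apply: ler_sum => y _; rewrite cmodM ler_wpM2l ?cmod_ge0 ?cmod_le_supnorm.
by rewrite -mulr_suml ler_wpM2r ?supnorm_ge0 //; exact: massB.
Qed.

Lemma opnorm_iter_Pt_le t m q n : 0 <= q -> (forall x, mass t m x <= q) ->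
  opnorm (iter n (Pt P f t)) <= q ^+ (n %/ m).
Proof.
move=> q_ge0 massq; apply: opnorm_le => [|g]; first exact: exprn_ge0.
rewrite {1}(divn_eq n m) addnC iterD.
apply: le_trans (supnorm_iter_Pt_le _ ler01 (mass_le1 t _)) _; rewrite mul1r.
elim: (n %/ m)%N => [|k IHk]; first by rewrite mul0n expr0 mul1r.
rewrite mulSn iterD exprS -mulrA.
by apply: le_trans (supnorm_iter_Pt_le _ q_ge0 massq) _; rewrite ler_wpM2l.
Qed.

Definition lip_const := 2 * \sum_w `|f w|.

Lemma lip_const_ge0 : 0 <= lip_const.
Proof. by rewrite mulr_ge0 // sumr_ge0. Qed.

Lemma cmod_twisted_kernelB s t x x' :
  cmod (twisted_kernel s x x' - twisted_kernel t x x') <= P x x' * (lip_const * `|s - t|).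
Proof.
rewrite -mulrBl cmodM cmodR ger0_norm // mulrC ler_wpM2l //.
apply: le_trans (cmod_expiB _ _) _; rewrite /lip_const -mulrA ler_wpM2l //.
rewrite -mulrBl normrM mulrC ler_wpM2r //.
by rewrite (bigD1 x') //= lerDl sumr_ge0.
Qed.

Lemma cmod_PtpowB s t m x y :
  cmod (Ptpow s m x y - Ptpow t m x y) <= m%:R * (lip_const * `|s - t|).
Proof.
set d := lip_const * `|s - t|.
elim: m x => [|m IHm] x; first by rewrite subrr mul0r cmod0.
rewrite /Ptpow !kernel_powS -/(Ptpow s) -/(Ptpow t) -sumrB.
apply: le_trans (cmod_sum _) _.
apply: le_trans (_ : \sum_w (P x w * d + P x w * (m%:R * d)) <= _); last first.
  by rewrite big_split /= -!mulr_suml P_sum1 !mul1r -addn1 natrD mulrDl mul1r addrC.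
apply: ler_sum => w _.
rewrite [X in cmod X](_ : _ = (twisted_kernel s x w - twisted_kernel t x w) * Ptpow s m w y
    + twisted_kernel t x w * (Ptpow s m w y - Ptpow t m w y)); last by ring.
apply: le_trans (cmodD _ _) _; apply: lerD; rewrite cmodM.
  rewrite -[leRHS]mulr1; apply: ler_pM; rewrite ?cmod_ge0 ?cmod_twisted_kernelB //.
  exact: le_trans (cmod_Ptpow_le _ _ _ _) (Ppow_le1 _ _ _).
by rewrite cmod_twisted_kernel ler_wpM2l.
Qed.

Lemma mass_lipschitz s t m x :
  mass s m x <= mass t m x + (m%:R * lip_const) *+ #|X| * `|s - t|.
Proof.
rewrite mulrnAl -mulrA /mass -sumr_const -big_split /=; apply: ler_sum => y _.
rewrite -[Ptpow s m x y](subrK (Ptpow t m x y)) addrC.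
by apply: le_trans (cmodD _ _) _; rewrite lerD2r cmod_PtpowB.
Qed.

Lemma Ppow_gt0_of_H1 : H1 P -> exists L, forall w y, 0 < Ppow L w y.
Proof.
case=> L [_ PL]; exists L => w y.
apply: (PL (fun x' => (x' == y)%:R)) => [x'|]; first exact: ler0n.
by exists y; rewrite eqxx oner_eq0.
Qed.

Lemma exists_Ppow_gt0 m w : exists v, 0 < Ppow m w v.
Proof. by apply: psumr_gt0_exists; [exact: Ppow_ge0 | rewrite Ppow_sum1 ltr01]. Qed.

Lemma Ppow_gt0_ge L : (forall w y, 0 < Ppow L w y) ->
  forall m w y, (L <= m)%N -> 0 < Ppow m w y.
Proof.
move=> PL m w y /subnK <-; rewrite /Ppow kernel_powD.
have [v Pv_gt0] := exists_Ppow_gt0 (m - L) w.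
rewrite (bigD1 v) //=; apply: ltr_pwDl; first exact: (mulr_gt0 Pv_gt0 (PL _ _)).
by apply: sumr_ge0 => *; rewrite mulr_ge0 ?Ppow_ge0.
Qed.

(** * Phase rigidity *)

Section PhaseRigidity.
Variables (t : R) (x : X) (L : nat).
Hypothesis PL_gt0 : forall w y, 0 < Ppow L w y.
Hypothesis cmod_Ptpow_eq : forall m y, cmod (Ptpow t m x y) = Ppow m x y.

Definition phase m y := Ptpow t m x y / (Ppow m x y)%:C.

Let Ppow_x_gt0 m y : (L <= m)%N -> 0 < Ppow m x y.
Proof. exact: Ppow_gt0_ge. Qed.

Let PpowC_neq0 m y : (L <= m)%N -> (Ppow m x y)%:C != 0.
Proof. by move=> Lm; rewrite realC_neq0 gt_eqF ?Ppow_x_gt0. Qed.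

Lemma Ptpow_phase m y : (L <= m)%N -> Ptpow t m x y = (Ppow m x y)%:C * phase m y.
Proof. by move=> Lm; rewrite mulrC divfK ?PpowC_neq0. Qed.

Lemma cmod_phase m y : (L <= m)%N -> cmod (phase m y) = 1.
Proof.
move=> Lm; rewrite cmodM cmodV cmodR cmod_Ptpow_eq ger0_norm ?Ppow_ge0 //.
by rewrite divff // gt_eqF ?Ppow_x_gt0.
Qed.

Lemma phase_neq0 m y : (L <= m)%N -> phase m y != 0.
Proof. by move=> Lm; rewrite -cmod_gt0 cmod_phase. Qed.

(* Equality in the triangle inequality for Ptpow t m.+1 x z forces all
   its summands to have the same argument. *)
Lemma phaseS m y z : (L <= m)%N -> 0 < P y z ->
  phase m.+1 z = expi (t * f z) * phase m y.
Proof.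
move=> Lm Pyz_gt0; have Lm1 := leqW Lm.
pose F w := Ptpow t m x w * twisted_kernel t w z.
have normF w : `|F w| = (Ppow m x w * P w z)%:C.
  by rewrite -cmodE cmodM cmod_twisted_kernel cmod_Ptpow_eq.
have sumF : Ptpow t m.+1 x z = \sum_w F w by rewrite /Ptpow kernel_powSr.
have norm_sumF : `|\sum_(w | true) F w| = \sum_(w | true) `|F w|.
  rewrite -sumF -cmodE cmod_Ptpow_eq /Ppow kernel_powSr rmorph_sum.
  by apply: eq_bigr => w _; rewrite normF.
have [u _ Fu] := normC_sum_eq norm_sumF.
have -> : phase m.+1 z = u.
  apply: (mulfI (PpowC_neq0 z Lm1)); rewrite -Ptpow_phase // sumF.
  under eq_bigr do rewrite Fu //.
  by rewrite -mulr_suml -norm_sumF -sumF -cmodE cmod_Ptpow_eq.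
have c_neq0 : (Ppow m x y * P y z)%:C != 0 by rewrite realC_neq0 mulf_neq0 ?gt_eqF ?Ppow_x_gt0.
apply: (mulfI c_neq0); move: (Fu y isT); rewrite normF /F Ptpow_phase // => <-.
by rewrite rmorphM /= /twisted_kernel; ring.
Qed.

Definition drift m y := phase m.+1 y / phase m y.

Lemma drift_edge m y z : (L <= m)%N -> 0 < P y z -> drift m.+1 z = drift m y.
Proof.
move=> Lm Pyz_gt0; rewrite /drift (phaseS (leqW Lm) Pyz_gt0) (phaseS Lm Pyz_gt0).
by rewrite invfM mulrACA divff ?mul1r // expi_neq0.
Qed.

Lemma drift_reach k m w y : (L <= m)%N -> 0 < Ppow k w y ->
  drift (m + k) y = drift m w.
Proof.
elim: k m w => [|k IHk] m w Lm.
  by rewrite /Ppow kernel_pow0 addn0; case: eqP => [->|_]; rewrite ?ltxx.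
rewrite /Ppow kernel_powS => /psumr_gt0_exists[v|v]; first by rewrite mulr_ge0 ?Ppow_ge0.
rewrite mulr_ge0_gt0 ?Ppow_ge0 // => /andP[Pwv_gt0 Pv_gt0].
by rewrite addnS -addSn (IHk _ v) ?(leqW Lm) // (drift_edge Lm Pwv_gt0).
Qed.

Lemma drift_const j y : drift (L + L + j) y = drift (L + L) x.
Proof.
have [z0 Pxz0_gt0] : exists z0, 0 < P x z0.
  by apply: psumr_gt0_exists => //; rewrite P_sum1 ltr01.
have drift_L m w y' : (L <= m)%N -> drift (m + L) y' = drift m w.
  by move=> Lm; apply: drift_reach.
elim: j y => [|j IHj] y; first by rewrite addn0 !(drift_L L x).
have LLj : (L <= L + j)%N := leq_addr _ _.
rewrite addnAC addnS (drift_L _ z0) ?(leqW LLj) // (drift_edge LLj Pxz0_gt0).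
by rewrite -(drift_L _ _ y LLj) -addnAC IHj.
Qed.

Lemma phase_drift k y : phase (L + L + k) y = drift (L + L) x ^+ k * phase (L + L) y.
Proof.
elim: k y => [|k IHk] y; first by rewrite addn0 expr0 mul1r.
rewrite addnS exprS -mulrA -IHk -(drift_const k y) /drift divfK //.
by rewrite phase_neq0 // -addnA leq_addr.
Qed.

Lemma expi_cycle n (xs : nat -> X) :
  0 < (\prod_(i < n) P (xs i) (xs i.+1)) * P (xs n) (xs 0%N) ->
  expi (t * \sum_(i < n.+1) f (xs i)) = drift (L + L) x ^+ n.+1.
Proof.
rewrite mulr_ge0_gt0 ?prodr_ge0 // => /andP[/gt_eqF/negbT/prodf_neq0 path_neq0 last_gt0].
have path_gt0 i : (i < n)%N -> 0 < P (xs i) (xs i.+1).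
  by move=> lt_in; rewrite lt_def P_ge0 andbT (path_neq0 (Ordinal lt_in)).
have LL_le k : (L <= L + L + k)%N by rewrite -addnA leq_addr.
have phase_path i : (i <= n)%N ->
    phase (L + L + i) (xs i) = expi (t * \sum_(j < i) f (xs j.+1)) * phase (L + L) (xs 0%N).
  elim: i => [|i IHi] lt_in; first by rewrite addn0 big_ord0 mulr0 expi0 mul1r.
  rewrite addnS (phaseS (LL_le i) (path_gt0 i lt_in)) (IHi (ltnW lt_in)).
  by rewrite mulrA expiD big_ord_recr /= mulrDr addrC.
have := phaseS (LL_le n) last_gt0.
rewrite phase_path // mulrA expiD -addnS phase_drift => /mulIf -> //.
  by rewrite big_ord_recl mulrDr.
by rewrite phase_neq0 // leq_addr.
Qed.

End PhaseRigidity.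

Lemma exists_cmod_Ptpow_lt t x : t != 0 -> H1 P -> H3 P f ->
  exists m y, cmod (Ptpow t m x y) < Ppow m x y.
Proof.
move=> t_neq0 /Ppow_gt0_of_H1[L PL_gt0] cycles.
apply: contrapT => no_gap.
have cmod_eq m y : cmod (Ptpow t m x y) = Ppow m x y.
  apply/eqP; rewrite eq_le cmod_Ptpow_le leNgt; apply/negP => lt_my.
  by apply: no_gap; exists m, y.
have [al drift_al] : exists al, drift t x (L + L) x = expi al.
  have LL : (L <= L + L)%N := leq_addr _ _.
  apply: cmod_eq1_expi.
  by rewrite cmodM cmodV !(cmod_phase PL_gt0 cmod_eq) ?invr1 ?mulr1 ?(leqW LL).
have [n [xs [cycle_gt0 not_int]]] := cycles (al / t) (pi *+ 2 / t).
have /expi_eq1[k Ek] : expi (t * \sum_(i < n.+1) f (xs i) - al *+ n.+1) = 1.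
  by rewrite -expiD (expi_cycle PL_gt0 cmod_eq cycle_gt0) drift_al expiMn expiD subrr expi0.
apply: not_int; exists k.
rewrite [RHS](_ : _ = pi *+ 2 * k%:~R / t); last by field.
by rewrite -Ek -[al *+ n.+1]mulr_natl; field.
Qed.

End TwistedKernel.

(** * Uniform contraction on compact sets *)

Section Contraction.
Variables (R : realType) (X : finType) (P : X -> X -> R) (f : X -> R).
Hypotheses (P_markov : markov_matrix P) (PH1 : H1 P) (PH3 : H3 P f).
Local Notation mass := (mass P f).

(* The threshold 1 - 1/(M+1) tends to 1, so every bound q < 1 eventually lies
   below it: the filter [\oo] then chooses M and the contraction factor at once. *)
Definition contracting t M := forall x, mass t M x <= 1 - M.+1%:R^-1.

Lemma near_contracting t : t != 0 -> \forall M \near \oo, contracting t M.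
Proof.
move=> t_neq0; apply: filter_forall => x.
have [m [y /(mass_lt1 P_markov) mass_lt]] := exists_cmod_Ptpow_lt P_markov x t_neq0 PH1 PH3.
apply: filterS2 (nbhs_infty_ge m) (near_infty_le_natSinv mass_lt) => M mM le_mass.
exact: le_trans (mass_nonincreasing f P_markov _ _ mM) le_mass.
Qed.

Lemma near_contracting_around t : t != 0 ->
  \forall s \near t & M \near \oo, contracting s M.
Proof.
move=> t_neq0; have [M0 ctM0] := filter_ex (near_contracting t_neq0).
pose e : R := M0.+1%:R^-1 / 2.
have e_gt0 : 0 < e by rewrite divr_gt0.
pose C := (M0%:R * lip_const f) *+ #|X|.
have C_ge0 : 0 <= C by rewrite mulrn_wge0 // mulr_ge0 ?lip_const_ge0.
have r_gt0 : 0 < e / (C + 1) by rewrite divr_gt0 // ltr_wpDl.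
near=> s M => x.
have sM0 : (M0 <= M)%N by near: M; exact: nbhs_infty_ge.
have Cst : C * `|s - t| <= e.
  have : ball t (e / (C + 1)) s by near: s; exact: nbhsx_ballx.
  rewrite -ball_normE /= distrC => /ltW st_le.
  apply: le_trans (ler_wpM2l C_ge0 st_le) _.
  by rewrite mulrA ler_pdivrMr ?ltr_wpDl // mulrC ler_pM2l // lerDl ler01.
have eM : 1 - M0.+1%:R^-1 + e <= 1 - M.+1%:R^-1.
  near: M; apply: near_infty_le_natSinv.
  by move: e_gt0; rewrite /e; set u := M0.+1%:R^-1; lra.
apply: le_trans (mass_nonincreasing f P_markov _ _ sM0) _.
apply: le_trans (mass_lipschitz f P_markov _ t _ _) _.
by apply: le_trans eM; rewrite lerD // ctM0.
Unshelve. all: end_near.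
Qed.

Lemma compact_near_contracting (K : set R) : compact K -> K `<=` [set t | t != 0] ->
  \forall M \near \oo, K `<=` contracting ^~ M.
Proof.
move=> /compact_near_coveringP K_cover K_neq0.
by apply: K_cover => t /K_neq0; exact: near_contracting_around.
Qed.

End Contraction.

Unset Implicit Arguments.
Theorem lemma4p2 (R : realType) (X : finType) (P : X -> X -> R) (f : X -> R) :
  markov_matrix P -> H1 P -> H3 P f ->
  forall K : set R, compact K -> K `<=` [set t | t != 0] ->
  exists cK cK' : R, 0 < cK /\ 0 < cK' /\
    forall n : nat, (1 <= n)%N ->
      sup [set opnorm (iter n (Pt P f t)) | t in K] <= cK * expR (- (cK' * n%:R)).
Proof.
move=> P_markov PH1 PH3 K K_compact K_neq0.
have [M [M_gt0 K_contracting]] := filter_ex (filterI (nbhs_infty_ge 1)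
  (compact_near_contracting P_markov PH1 PH3 K_compact K_neq0)).
pose a : R := M.+1%:R^-1.
have a_itv : 0 <= a <= 1 by rewrite /a invr_ge0 ler0n invf_le1 ?ler1n ?ltr0n.
exists (expR a), (a / M%:R); split; first exact: expR_gt0.
split; first by rewrite divr_gt0 ?invr_gt0 ?ltr0n.
move=> n _; apply: sup_le_ge0 => [|_ [t Kt <-]]; first by rewrite mulr_ge0 ?expR_ge0.
apply: le_trans (exprn_divn_le_expR n M_gt0 a_itv).
apply: (opnorm_iter_Pt_le P_markov); last exact: K_contracting.
by rewrite subr_ge0; case/andP: a_itv.
Qed.
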